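(* For every integer $k\ge 3$ there exist an integer $i$ with $1\le i<k$, a real $t\in[0,1]$ with $i(1-t)=k/2$, and a function $m(v)=\Theta(v^t)$ such that the $k$-uniform hypergraph properties $f_v$ defined by ''$f_v(H)=1$ iff there is $S\subseteq[v]$, $|S|=m(v)$, such that every $k$-subset of $S$ is an edge of $H$ and every edge $E$ of $H$ with $E\not\subseteq S$ satisfies $|E\cap S|<i$'' satisfy $s(f_v)=\Theta(v^{k/2})$. In particular, for every $k\ge 2$ there is a $k$-uniform hypergraph property with $s(f)=\Theta(v^{k/2})=\Theta(\sqrt{n})$, $n=\binom vk$.
   Context: A $k$-uniform hypergraph on $[v]$ is identified with a string in $\{0,1\}^{\binom vk}$. A $k$-uniform hypergraph property is a Boolean function on such strings invariant under all permutations of $[v]$. $s(f,x)$ is the number of coordinates whose flip changes $f(x)$, and $s(f)=\max_x s(f,x)$. Asymptotics are as $v\to\infty$ with $k$ fixed. *)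

From mathcomp Require Import all_boot.
From mathcomp Require Import fingroup perm.
From Stdlib Require Import Reals.

Set Implicit Arguments.
Unset Strict Implicit.
Unset Printing Implicit Defensive.

Definition ksub (v k : nat) := {A : {set 'I_v} | #|A| == k}.

Definition hgraph (v k : nat) := {ffun ksub v k -> bool}.

(* Image of a k-subset under a permutation of [v]
   (cardinality is preserved, so insubd never uses its default). *)
Definition ksub_map (v k : nat) (s : {perm 'I_v}) (E : ksub v k) : ksub v k :=
  insubd E (s @: val E).

Definition relabel (v k : nat) (s : {perm 'I_v}) (H : hgraph v k) : hgraph v k :=
  [ffun E => H (ksub_map s E)].

Definition is_hproperty (v k : nat) (f : hgraph v k -> bool) : Prop :=
  forall (s : {perm 'I_v}) (H : hgraph v k), f (relabel s H) = f H.

Definition flip (v k : nat) (H : hgraph v k) (e : ksub v k) : hgraph v k :=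
  [ffun E => if E == e then ~~ H E else H E].

Definition sens_at (v k : nat) (f : hgraph v k -> bool) (H : hgraph v k) : nat :=
  #|[set e : ksub v k | f (flip H e) != f H]|.

Definition sens (v k : nat) (f : hgraph v k -> bool) : nat :=
  \max_(H : hgraph v k) sens_at f H.

Definition clique_prop (v k i m : nat) (H : hgraph v k) : bool :=
  [exists S : {set 'I_v},
     (#|S| == m) &&
     [forall E : ksub v k,
        ((val E \subset S) ==> H E) &&
        ((H E && ~~ (val E \subset S)) ==> (#|val E :&: S| < i))]].

Definition bigTheta (g h : nat -> R) : Prop :=
  exists (c1 c2 : R) (N : nat), (0 < c1)%R /\ (0 < c2)%R /\
    forall v : nat, (N <= v)%nat -> (c1 * h v <= g v <= c2 * h v)%R.

(* Write f = clique_prop i m.  If f H holds with witness S, flipping an edge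
   that meets S in fewer than i vertices keeps S a witness, so at most
   C(m,i) C(v,k-i) edges are sensitive.  If f H fails, every sensitive edge e
   has a witness S_e for the flipped graph, and two such witnesses share fewer
   than i vertices; the families of i-subsets of the S_e are therefore
   pairwise disjoint, which leaves at most C(v,i) / C(m,i) sensitive edges.  Conversely the
   complete graph on an m-set S0 is sensitive at every edge meeting S0 in at
   least i vertices, about C(m,i) C(v-m,k-i) of them.  For i = k-1 and
   m ~ v^t with t = (k-2)/(2(k-1)) one has C(m,k-1)^2 ~ v^(k-2), and both
   bounds become Theta(v^(k/2)). *)

From mathcomp Require Import all_boot.
From mathcomp Require Import fingroup perm.
From mathcomp Require Import zify.
From Stdlib Require Import Reals Lra Lia.

Set Implicit Arguments.
Unset Strict Implicit.
Unset Printing Implicit Defensive.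

(* [Reals] rebinds [^] to real powers in [nat_scope]. *)
Local Notation "a ^ b" := (expn a b) : nat_scope.

Lemma exists_subset_card (T : finType) (Y X : {set T}) n :
  Y \subset X -> #|Y| <= n -> n <= #|X| ->
  exists Z : {set T}, [/\ Y \subset Z, Z \subset X & #|Z| = n].
Proof.
move=> sYX leYn; have [d ->] : exists d, n = #|Y| + d by exists (n - #|Y|); lia.
elim: d => [|d IH] leX; first by exists Y; rewrite addn0.
have [|Z [sYZ sZX cZ]] := IH; first lia.
have /card_gt0P[z] : 0 < #|X :\: Z| by rewrite cardsD (setIidPr sZX) cZ; lia.
rewrite inE => /andP[zZ zX]; exists (z |: Z); split.
- exact: subset_trans sYZ (subsetUr _ _).
- by rewrite subUset sub1set zX sZX.
- by rewrite cardsU1 zZ cZ addnS.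
Qed.

Definition subset_of_card (T : finType) n (X : {set T}) : {set T} :=
  odflt set0 [pick A : {set T} | (A \subset X) && (#|A| == n)].

Lemma subset_of_cardP (T : finType) n (X : {set T}) :
  n <= #|X| -> subset_of_card n X \subset X /\ #|subset_of_card n X| = n.
Proof.
move=> leX; rewrite /subset_of_card; case: pickP => [A /andP[sAX /eqP //]|none].
have [|Z [_ sZX cZ]] := exists_subset_card (sub0set X) _ leX; first by rewrite cards0.
by move: (none Z); rewrite sZX cZ eqxx.
Qed.

Section Witness.
Variables v k i m : nat.
Implicit Types (H : hgraph v k) (S : {set 'I_v}) (e E : ksub v k).

Definition clique_witness H S : bool :=
  (#|S| == m) && [forall E : ksub v k,
        ((val E \subset S) ==> H E) &&
        ((H E && ~~ (val E \subset S)) ==> (#|val E :&: S| < i))].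

Lemma clique_propP H S : clique_witness H S -> clique_prop i m H.
Proof. by move=> wS; apply/existsP; exists S. Qed.

Lemma card_witness H S : clique_witness H S -> #|S| = m.
Proof. by case/andP=> /eqP. Qed.

Lemma card_ksub E : #|val E| = k.
Proof. by apply/eqP; case: E. Qed.

Lemma flipE H e E : flip H e E = if E == e then ~~ H E else H E.
Proof. by rewrite ffunE. Qed.

Lemma flipK H e : flip (flip H e) e = H.
Proof. by apply/ffunP => E; rewrite !flipE; case: eqP => [->|]; rewrite ?negbK. Qed.

Lemma witness_edgeE H S E :
  clique_witness H S -> i <= #|val E :&: S| -> H E = (val E \subset S).
Proof.
case/andP=> _ /forallP /(_ E) /andP [inS outS] leiE.
case sES: (val E \subset S); first by move: inS; rewrite sES.
by apply/negbTE/negP => HE; move: outS; rewrite HE sES /= ltnNge leiE.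
Qed.

Lemma witness_flip_small H e S : i <= k ->
  clique_witness (flip H e) S -> #|val e :&: S| < i -> clique_witness H S.
Proof.
move=> leik /andP[cS /forallP wS] lt_eS; rewrite /clique_witness cS /=.
apply/forallP => E; have := wS E; rewrite flipE; case: eqP => [-> _|//].
have nse : ~~ (val e \subset S).
  by apply: contraTN lt_eS => /setIidPl ->; rewrite card_ksub -leqNgt.
by rewrite (negbTE nse) lt_eS !implybT.
Qed.

End Witness.

Definition heavy_edges v k i (S : {set 'I_v}) : {set ksub v k} :=
  [set e | i <= #|val e :&: S|].

Lemma card_heavy_edges_le v k i (S : {set 'I_v}) :
  #|heavy_edges k i S| <= 'C(#|S|, i) * 'C(v, k - i).
Proof.
pose core (e : ksub v k) := subset_of_card i (val e :&: S).
have coreP e : e \in heavy_edges k i S ->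
    core e \subset val e /\ core e \subset S /\ #|core e| = i.
  by rewrite inE => /subset_of_cardP[]; rewrite subsetI => /andP[].
rewrite -(card_in_imset (f := fun e => (core e, val e :\: core e))); last first.
  move=> e1 e2 /coreP[s1 _] /coreP[s2 _] [eq_core eq_rest]; apply: val_inj.
  by rewrite -(setID (val e1) (core e1)) -(setID (val e2) (core e2))
    (setIidPr s1) (setIidPr s2) eq_rest eq_core.
rewrite -[X in _ * 'C(X, _)]card_ord -cards_draws -card_draws -cardsX.
apply/subset_leq_card/subsetP => _ /imsetP[e /coreP[s1 [s2 c]] ->].
by rewrite in_setX !inE s2 cardsD (setIidPr s1) c card_ksub !eqxx.
Qed.

Lemma packing_bound (I T : finType) (F : {set I}) (B : I -> {set T}) m i :
  {in F, forall x, #|B x| = m} ->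
  {in F &, forall x y, x != y -> #|B x :&: B y| < i} ->
  #|F| * 'C(m, i) <= 'C(#|T|, i).
Proof.
move=> cardB smallI.
pose D (x : I) : {set {set T}} :=
  if x \in F then [set A : {set T} | A \subset B x & #|A| == i] else set0.
have disjD x y : x != y -> [disjoint D x & D y].
  move=> neq; rewrite /D disjoints_subset; apply/subsetP => A.
  case: ifP => Fx; case: ifP => Fy; rewrite !inE // => /andP[sAx /eqP cA].
  apply/negP => /andP[sAy _]; have := smallI x y Fx Fy neq.
  by rewrite -cA ltnNge subset_leq_card // subsetI sAx sAy.
have <- : \sum_x \sum_(A in D x) 1 = #|F| * 'C(m, i).
  rewrite -sum_nat_const [RHS]big_mkcond; apply: eq_bigr => x _.
  by rewrite sum1_card /D; case: ifP => Fx; rewrite ?cards0 // cards_draws cardB.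
rewrite -partition_disjoint_bigcup // sum1_card -card_draws.
apply/subset_leq_card/subsetP => A /bigcupP[x _].
by rewrite /D; case: ifP => _; rewrite !inE // => /andP[_ ->].
Qed.

Lemma crossing_seed (T : finType) (S S' U : {set T}) k i m :
  0 < i -> 4 * k < m -> #|S| = m -> #|S'| = m -> S != S' ->
  i <= #|S :&: S'| -> #|U| <= 2 * k ->
  exists (x : T) (A : {set T}) (z : T),
    [/\ x \in S' :\: S, A \subset S :&: S', #|A| = i, z \in x |: A & z \notin U].
Proof.
move=> i_gt0 lt_km cS cS' neqS le_iI leU.
have [sIU | /subsetPn[z zI zU]] := boolP (S :&: S' \subset U).
  have /card_gt0P[x] : 0 < #|(S' :\: S) :\: U|.
    have := cardsD (S' :\: S) U; have := subset_leq_card (subsetIr (S' :\: S) U).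
    have : #|S' :\: S| = m - #|S :&: S'| by rewrite cardsD setIC cS'.
    have := subset_leq_card sIU; lia.
  rewrite inE => /andP[xU xS'S].
  have [|A [_ sAI cA]] := exists_subset_card (sub0set (S :&: S')) _ le_iI.
    by rewrite cards0.
  by exists x, A, x; rewrite setU11.
have [||A [zA sAI cA]] := exists_subset_card (Y := [set z]) _ _ le_iI.
- by rewrite sub1set.
- by rewrite cards1.
have /set0Pn[x xS'S] : S' :\: S != set0.
  rewrite setD_eq0; apply: contra neqS => sS'S.
  by rewrite eq_sym eqEcard sS'S cS cS' leqnn.
by exists x, A, z; rewrite in_setU1 (subsetP zA) ?set11 ?orbT.
Qed.

Lemma exists_crossing_subset (T : finType) (S S' U : {set T}) k i m :
  0 < i -> i < k -> 4 * k < m -> #|S| = m -> #|S'| = m -> S != S' ->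
  i <= #|S :&: S'| -> #|U| <= 2 * k ->
  exists E : {set T}, [/\ #|E| = k, E \subset S', ~~ (E \subset S),
                          i <= #|E :&: S| & ~~ (E \subset U)].
Proof.
move=> i_gt0 lt_ik lt_km cS cS' neqS le_iI leU.
have [x [A [z [/setDP[xS' xS] sAI cA zxA zU]]]] :=
  crossing_seed i_gt0 lt_km cS cS' neqS le_iI leU.
have [sAS sAS'] : A \subset S /\ A \subset S' by apply/andP; rewrite -subsetI.
have xA : x \notin A by apply: contra xS => /(subsetP sAS).
have [|||E [sxAE sES' cE]] := @exists_subset_card _ (x |: A) S' k.
- by rewrite subUset sub1set xS' sAS'.
- by rewrite cardsU1 xA cA.
- by rewrite cS'; lia.
have xE : x \in E by rewrite (subsetP sxAE) ?setU11.
exists E; split=> //.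
- by apply: contra xS => /subsetP; apply.
- by rewrite -cA subset_leq_card // subsetI sAS (subset_trans (subsetUr _ _) sxAE).
- by apply: contra zU => /subsetP; apply; rewrite (subsetP sxAE).
Qed.

Section UpperBound.
Variables v k i m : nat.
Hypotheses (i_gt0 : 0 < i) (lt_ik : i < k) (lt_km : 4 * k < m).
Implicit Types (H : hgraph v k) (S : {set 'I_v}).

Lemma flip_witnesses_meet_small H e e' S S' :
  ~~ clique_prop i m H -> e != e' ->
  clique_witness i m (flip H e) S -> clique_witness i m (flip H e') S' ->
  #|S :&: S'| < i.
Proof.
move=> nH neq wS wS'; have le_ik := ltnW lt_ik.
have heavy_flip e0 S0 : clique_witness i m (flip H e0) S0 -> i <= #|val e0 :&: S0|.
  move=> w0; rewrite leqNgt; apply: contra nH => small.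
  exact: clique_propP (witness_flip_small le_ik w0 small).
have agree E : E != e -> E != e' -> i <= #|val E :&: S| -> i <= #|val E :&: S'| ->
    (val E \subset S) = (val E \subset S').
  move=> ne ne' hS hS'.
  by rewrite -(witness_edgeE wS hS) -(witness_edgeE wS' hS') !flipE (negbTE ne) (negbTE ne').
have neqS : S != S'.
  apply: contraNneq neq => eqS; move: wS'; rewrite -eqS => wS'.
  have heavy_e := heavy_flip _ _ wS.
  have := witness_edgeE wS' heavy_e; rewrite -(witness_edgeE wS heavy_e).
  by rewrite !flipE eqxx; case: eqP => // _; case: (H e).
(* Otherwise some k-subset of S' crossing S is heavy for both witnesses but
   lies in only one of them, although it is neither e nor e'. *)
rewrite ltnNge; apply/negP => le_iI.
have leU : #|val e :|: val e'| <= 2 * k by rewrite cardsU !card_ksub; lia.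
have [E0 [cE0 sE0S' nsE0S heavyE0 nsE0U]] :=
  exists_crossing_subset i_gt0 lt_ik lt_km (card_witness wS) (card_witness wS') neqS le_iI leU.
pose E : ksub v k := exist _ E0 (introT eqP cE0).
have neE (e0 : ksub v k) : val e0 \subset val e :|: val e' -> E != e0.
  by move=> se0; apply: contraNneq nsE0U => eqE; move: se0; rewrite -eqE.
have := agree E (neE e (subsetUl _ _)) (neE e' (subsetUr _ _)) heavyE0.
by rewrite /= (setIidPl sE0S') cE0 le_ik sE0S' (negbTE nsE0S) => /(_ isT).
Qed.

Lemma sens_at_clique_prop_true H : clique_prop i m H ->
  sens_at (clique_prop i m) H <= 'C(m, i) * 'C(v, k - i).
Proof.
case/existsP=> S wS; rewrite -[in 'C(m, i)](card_witness wS).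
apply: leq_trans (card_heavy_edges_le k i S); apply/subset_leq_card/subsetP => e.
rewrite !inE; apply: contraR; rewrite -ltnNge => small.
have wS' : clique_witness i m (flip H e) S.
  by apply: (witness_flip_small (ltnW lt_ik) _ small); rewrite flipK.
by rewrite (clique_propP wS) (clique_propP wS').
Qed.

Lemma sens_at_clique_prop_false H : ~~ clique_prop i m H ->
  sens_at (clique_prop i m) H * 'C(m, i) <= 'C(v, i).
Proof.
move=> nH; pose Sf e := odflt set0 [pick S | clique_witness i m (flip H e) S].
have SfP e : e \in [set e | clique_prop i m (flip H e) != clique_prop i m H] ->
    clique_witness i m (flip H e) (Sf e).
  rewrite inE (negbTE nH); case: (boolP (clique_prop _ _ _)) => // /existsP[S wS] _.
  by rewrite /Sf; case: pickP => // /(_ S)/negbT/negP.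
rewrite -[X in _ <= 'C(X, _)]card_ord; apply: (packing_bound (B := Sf)).
- by move=> e /SfP /card_witness.
- by move=> e e' /SfP w /SfP w' neq; apply: flip_witnesses_meet_small w w'.
Qed.

Lemma sens_attained (f : hgraph v k -> bool) : exists H, sens f = sens_at f H.
Proof.
have nonempty : 0 < #|hgraph v k| by rewrite card_ffun expn_gt0 card_bool.
by rewrite /sens; have [H ->] := eq_bigmax (sens_at f) nonempty; exists H.
Qed.

Lemma sens_clique_prop_le :
  sens (@clique_prop v k i m) * 'C(m, i) <= 'C(m, i) * 'C(m, i) * 'C(v, k - i) + 'C(v, i).
Proof.
have [H ->] := sens_attained (@clique_prop v k i m).
have [pH | nH] := boolP (clique_prop i m H).
- apply: leq_trans (leq_addr _ _).
  by rewrite mulnC -mulnA leq_mul2l sens_at_clique_prop_true ?orbT.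
- by apply: leq_trans (leq_addl _ _); apply: sens_at_clique_prop_false.
Qed.

End UpperBound.

Lemma setIU_disjoint (T : finType) (X Y S : {set T}) :
  X \subset S -> [disjoint Y & S] -> (X :|: Y) :&: S = X.
Proof. by move=> sXS dYS; rewrite setIUl (setIidPl sXS) disjoint_setI0 ?setU0. Qed.

Lemma card_heavy_edges_ge v k i (S : {set 'I_v}) : i <= k ->
  'C(#|S|, i) * 'C(v - #|S|, k - i) <= #|heavy_edges k i S|.
Proof.
move=> le_ik.
have cSc : #|~: S| = v - #|S| by rewrite cardsCs setCK card_ord.
rewrite -cSc -!cards_draws -cardsX.
set D := setX _ _.
have inj : {in D &, injective (fun p : {set 'I_v} * {set 'I_v} => p.1 :|: p.2)}.
  move=> [A B] [A' B']; rewrite !inE /= => /andP[/andP[sAS _] /andP[sBS _]].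
  move=> /andP[/andP[sA'S _] /andP[sB'S _]] eqU.
  have dS (X : {set 'I_v}) : X \subset ~: S -> [disjoint X & S] by rewrite disjoints_subset.
  have dSc (X : {set 'I_v}) : X \subset S -> [disjoint X & ~: S].
    by rewrite disjoints_subset setCK.
  congr pair.
  - by rewrite -(setIU_disjoint sAS (dS _ sBS)) eqU setIU_disjoint ?dS.
  - by rewrite -(setIU_disjoint sBS (dSc _ sAS)) setUC eqU setUC setIU_disjoint ?dSc.
rewrite -(card_in_imset inj) -[X in _ <= X](card_imset _ val_inj).
apply/subset_leq_card/subsetP => X /imsetP[[A B]].
rewrite !inE /= => /andP[/andP[sAS /eqP cA] /andP[sBS /eqP cB]] ->.
have dBS : [disjoint B & S] by rewrite disjoints_subset.
have cU : #|A :|: B| == k.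
  rewrite cardsU disjoint_setI0 ?cards0 ?cA ?cB ?subn0; first by apply/eqP; lia.
  by rewrite (disjointWl sAS) // disjoint_sym.
apply/imsetP; exists (exist (fun E : {set 'I_v} => #|E| == k) _ cU) => //.
by rewrite inE /= (setIU_disjoint sAS dBS) cA.
Qed.

Section LowerBound.
Variables (v k i m : nat) (S0 : {set 'I_v}).
Hypotheses (lt1k : 1 < k) (le_km : k + 2 <= m) (cS0 : #|S0| = m).

Definition clique_on : hgraph v k := [ffun E : ksub v k => val E \subset S0].

Lemma clique_on_prop : clique_prop i m clique_on.
Proof.
apply: (clique_propP (S := S0)); rewrite /clique_witness cS0 eqxx /=.
by apply/forallP => E; rewrite ffunE; case: (_ \subset _).
Qed.

(* A vertex of the witness outside S0 lies in a k-subset of it other than e,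
   which would have to be an edge of [flip clique_on e] although it leaves S0. *)
Lemma witness_flip_clique_on e S :
  clique_witness i m (flip clique_on e) S -> S = S0.
Proof.
move=> wS; have cS := card_witness wS.
apply/eqP; rewrite eqEcard cS cS0 leqnn andbT; apply/subsetP => x xS.
apply/negPn/negP => xS0.
have /card_gt0P[y] : 0 < #|(S :\: val e) :\: [set x]|.
  have := cardsD (S :\: val e) [set x].
  have := subset_leq_card (subsetIr (S :\: val e) [set x]).
  have := cardsD S (val e); have := subset_leq_card (subsetIr S (val e)).
  by rewrite cards1 card_ksub cS; lia.
rewrite !inE => /andP[yx /andP[ye yS]].
have [|||E0 [sxyE0 sE0S cE0]] := @exists_subset_card _ [set x; y] S k.
- by rewrite subUset !sub1set xS yS.
- by rewrite cards2 eq_sym yx.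
- by rewrite cS; lia.
pose E : ksub v k := exist _ E0 (introT eqP cE0).
have nEe : E != e.
  by apply: contraNneq ye => <-; apply: (subsetP sxyE0); rewrite !inE eqxx orbT.
case/andP: wS => _ /forallP /(_ E) /andP[+ _]; rewrite /= sE0S flipE (negbTE nEe) ffunE /=.
by move=> sE0S0; rewrite (subsetP sE0S0) ?(subsetP sxyE0) ?set21 in xS0.
Qed.

Lemma clique_on_flip_heavy e : i <= #|val e :&: S0| ->
  clique_prop i m (flip clique_on e) = false.
Proof.
move=> heavy; apply/negbTE/existsP => -[S wS].
have eS := witness_flip_clique_on wS; rewrite -eS in heavy.
by have := witness_edgeE wS heavy; rewrite eS flipE eqxx ffunE; case: (_ \subset _).
Qed.

End LowerBound.

Lemma sens_clique_prop_ge v k i m : 0 < i -> i < k -> k + 2 <= m -> m <= v ->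
  'C(m, i) * 'C(v - m, k - i) <= sens (@clique_prop v k i m).
Proof.
move=> i_gt0 lt_ik le_km le_mv.
have [||S0 [_ _ cS0]] := @exists_subset_card _ set0 [set: 'I_v] m (sub0set _).
- by rewrite cards0.
- by rewrite cardsT card_ord.
have lt1k : 1 < k by lia.
apply: leq_trans (leq_bigmax (clique_on k S0)).
have := card_heavy_edges_ge S0 (ltnW lt_ik); rewrite cS0 => /leq_trans; apply.
apply/subset_leq_card/subsetP => e; rewrite !inE => heavy.
by rewrite (clique_on_flip_heavy lt1k le_km cS0 heavy) (clique_on_prop k i cS0).
Qed.

Section Relabel.
Variables v k i m : nat.
Implicit Types (s : {perm 'I_v}) (H : hgraph v k).

Lemma ksub_mapE s (E : ksub v k) : val (ksub_map s E) = s @: val E.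
Proof.
by rewrite /ksub_map insubdK // unfold_in card_imset ?card_ksub //; apply: perm_inj.
Qed.

Lemma relabelK s H : relabel s^-1%g (relabel s H) = H.
Proof.
apply/ffunP => E; rewrite !ffunE; congr (H _); apply: val_inj.
rewrite !ksub_mapE -imset_comp (eq_imset (g := fun x : 'I_v => x)) ?imset_id // => x /=.
exact: permKV.
Qed.

Lemma witness_relabel s H S :
  clique_witness i m H S -> clique_witness i m (relabel s H) (s @^-1: S).
Proof.
case/andP=> cS /forallP wS; rewrite /clique_witness card_preimset ?cS /=; last exact: perm_inj.
apply/forallP => E; have := wS (ksub_map s E); rewrite ffunE ksub_mapE sub_imset_pre.
suff -> : #|s @: val E :&: S| = #|val E :&: s @^-1: S| by [].
have preim_imset : s @^-1: (s @: val E) = val E.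
  by apply/setP => x; rewrite inE mem_imset //; apply: perm_inj.
by rewrite -(card_preimset _ (@perm_inj _ s)) preimsetI preim_imset.
Qed.

Lemma clique_prop_hproperty : is_hproperty (@clique_prop v k i m).
Proof.
have relabel_prop s H : clique_prop i m H -> clique_prop i m (relabel s H).
  by case/existsP=> S /(witness_relabel s); apply: clique_propP.
move=> s H; apply/idP/idP; last exact: relabel_prop.
by move=> /(relabel_prop s^-1%g); rewrite relabelK.
Qed.

End Relabel.

Lemma leq_exp2rW a b e : a <= b -> a ^ e <= b ^ e.
Proof. by case: e => [|e] leab; rewrite ?expn0 // leq_exp2r. Qed.

Lemma bin_leq_exp n j : 'C(n, j) <= n ^ j.
Proof.
have ffact_leq_exp x : x ^_ j <= x ^ j.
  elim: j x => [|j IH] x; first by rewrite ffactn0 expn0.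
  by rewrite ffactnS expnS leq_mul2l (leq_trans (IH _)) ?leq_exp2rW ?leq_pred ?orbT.
by apply: leq_trans (ffact_leq_exp n); rewrite -bin_ffact leq_pmulr ?fact_gt0.
Qed.

Lemma exp_leq_bin n j : 2 * j <= n -> n ^ j <= 2 ^ j * j`! * 'C(n, j).
Proof.
rewrite -mulnA [j`! * _]mulnC bin_ffact.
elim: j => [|j IH] le2jn; first by rewrite expn0 ffactn0.
have := IH ltac:(lia); rewrite ffactnSr !expnS.
have : n <= 2 * (n - j) by lia.
set X := n ^ j; set Y := n ^_ j => le_n le_XY.
by have := leq_mul le_XY le_n; nia.
Qed.

Definition iroot n X := \max_(q < X.+1 | q ^ n <= X) q.

Lemma irootP n X : 0 < n -> iroot n X ^ n <= X < (iroot n X).+1 ^ n.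
Proof.
move=> n_gt0; apply/andP; split.
  apply: (big_ind (fun r => r ^ n <= X)) => //; first by rewrite exp0n.
  by move=> a b; rewrite /maxn; case: ltnP.
rewrite ltnNge; apply/negP => le_X.
have le_rX : (iroot n X).+1 <= X.
  by apply: leq_trans le_X; case: n n_gt0 => // n _; rewrite expnS leq_pmulr ?expn_gt0.
have := @leq_bigmax_cond _ (fun q : 'I_X.+1 => q ^ n <= X) val
  (Ordinal (le_rX : (iroot n X).+1 < X.+1)) le_X.
by rewrite ltnn.
Qed.

Lemma sqrD_leq a b : (a + b) * (a + b) <= 2 * (a * a) + 2 * (b * b).
Proof.
have [le_ab|/ltnW le_ba] := leqP a b.
- have [d ->] : exists d, b = a + d by exists (b - a); lia.
  nia.
- have [d ->] : exists d, a = b + d by exists (a - b); lia.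
  nia.
Qed.

Lemma sens_sq_leq s c x Z Y A B : 0 < c ->
  s * c <= c * c * x + Z -> Z * Z <= Y * (Y * (x * x)) ->
  Y <= A * (c * c) -> c * c <= B * Y ->
  s * s <= 2 * (A + B) * (Y * (x * x)).
Proof.
move=> c_gt0 le_sc le_Z le_YA le_cB.
rewrite -(leq_pmul2r (_ : 0 < c * c)) ?muln_gt0 ?c_gt0 //.
have le_sc_sq : s * s * (c * c) <= (c * c * x + Z) * (c * c * x + Z).
  by rewrite mulnACA; apply: leq_mul.
have le_cx_sq : c * c * (c * c) * (x * x) <= c * c * (B * Y) * (x * x).
  exact: leq_mul (leq_mul (leqnn _) le_cB) (leqnn _).
have le_Z_sq : Z * Z <= A * (c * c) * (Y * (x * x)).
  exact: leq_trans le_Z (leq_mul le_YA (leqnn _)).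
have := sqrD_leq (c * c * x) Z; nia.
Qed.

Lemma sens_sq_geq s c x m Y A : c * (x - m) <= s -> 2 * m <= x ->
  Y <= A * (c * c) -> Y * (x * x) <= 4 * A * (s * s).
Proof.
move=> le_cs le_mx le_YA.
have le_x : x <= 2 * (x - m) by lia.
have le_Yx : Y * (x * x) <= A * (c * c) * ((2 * (x - m)) * (2 * (x - m))).
  by apply: leq_mul => //; apply: leq_mul.
have le_cs_sq : (c * (x - m)) * (c * (x - m)) <= s * s by apply: leq_mul.
nia.
Qed.

(* clique_root k v ~ v^t with t = (k-2)/(2(k-1)), hence
   C(clique_size k v, k-1)^2 ~ v^(k-2); the factor 4k+1 ensures m > 4k. *)
Definition clique_root k v := iroot (2 * k.-1) (v ^ (k - 2)).
Definition clique_size k v := (4 * k + 1) * clique_root k v.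

Section CliqueSize.
Variable k : nat.
Hypothesis lt1k : 1 < k.

Let sq_expn x : x ^ (2 * k.-1) = x ^ k.-1 * x ^ k.-1.
Proof. by rewrite mul2n -addnn expnD. Qed.

Lemma clique_root_bounds v : 0 < v ->
  [/\ 0 < clique_root k v, clique_root k v ^ (2 * k.-1) <= v ^ (k - 2)
    & v ^ (k - 2) <= 2 ^ (2 * k.-1) * clique_root k v ^ (2 * k.-1)].
Proof.
move=> v_gt0; rewrite /clique_root.
have n_gt0 : 0 < 2 * k.-1 by lia.
have /andP[le_rX lt_X] := irootP (v ^ (k - 2)) n_gt0.
set r := iroot _ _ in le_rX lt_X *.
have r_gt0 : 0 < r.
  rewrite lt0n; apply: contraTneq lt_X => ->.
  by rewrite exp1n -leqNgt expn_gt0 v_gt0.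
split=> //; apply/ltnW/(leq_trans lt_X); rewrite -expnMn leq_exp2rW //; lia.
Qed.

Lemma clique_size_gt v : 0 < v -> 4 * k < clique_size k v.
Proof. by case/clique_root_bounds => r_gt0 _ _; rewrite /clique_size; nia. Qed.

Lemma clique_size_half v :
  (2 * (4 * k + 1)) ^ (2 * k.-1) <= v -> 2 * clique_size k v <= v.
Proof.
move=> le_v.
have v_gt0 : 0 < v by apply: leq_trans _ le_v; rewrite expn_gt0 muln_gt0 addn1.
have [_ le_rv _] := clique_root_bounds v_gt0.
rewrite -(@leq_exp2r _ _ (2 * k.-1)); last lia.
rewrite /clique_size mulnA expnMn; apply: (leq_trans (leq_mul le_v le_rv)).
by rewrite -expnS leq_pexp2l //; lia.
Qed.

Lemma clique_binomial_sq_geq v : 0 < v ->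
  v ^ (k - 2) <= 2 ^ (2 * k.-1) * (2 ^ k.-1 * k.-1`! * (2 ^ k.-1 * k.-1`!)) *
                 ('C(clique_size k v, k.-1) * 'C(clique_size k v, k.-1)).
Proof.
move=> v_gt0; set c := 'C(_, _); have [_ _ le_vr] := clique_root_bounds v_gt0.
have le_mc : clique_size k v ^ k.-1 <= 2 ^ k.-1 * k.-1`! * c.
  by apply: exp_leq_bin; have := clique_size_gt v_gt0; lia.
apply: (leq_trans le_vr); rewrite -mulnA leq_mul2l; apply/orP; right.
apply: (@leq_trans (clique_size k v ^ (2 * k.-1))).
  by apply: leq_exp2rW; rewrite /clique_size leq_pmull // addn1.
by rewrite sq_expn mulnACA; apply: leq_mul.
Qed.

Lemma clique_binomial_sq_leq v : 0 < v ->
  'C(clique_size k v, k.-1) * 'C(clique_size k v, k.-1) <=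
    (4 * k + 1) ^ (2 * k.-1) * v ^ (k - 2).
Proof.
move=> v_gt0; have [_ le_rv _] := clique_root_bounds v_gt0.
apply: (@leq_trans (clique_size k v ^ (2 * k.-1))).
  by rewrite sq_expn; apply: leq_mul; apply: bin_leq_exp.
by rewrite /clique_size expnMn leq_mul2l le_rv orbT.
Qed.

Let sens_clique v := sens (@clique_prop v k k.-1 (clique_size k v)).

Let expn_split v : v ^ k = v ^ (k - 2) * (v * v).
Proof. by rewrite -[v * v]/(v ^ 2) -expnD subnK. Qed.

Lemma sens_clique_sq_upper :
  exists B, forall v, 0 < v -> sens_clique v * sens_clique v <= B * v ^ k.
Proof.
eexists => v v_gt0; have m_gt := clique_size_gt v_gt0.
have i_gt0 : 0 < k.-1 by lia.
have lt_ik : k.-1 < k by lia.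
have := sens_clique_prop_le v i_gt0 lt_ik m_gt.
rewrite (_ : k - k.-1 = 1) ?bin1 => [le_sc|]; last lia.
rewrite expn_split; apply: sens_sq_leq le_sc _
  (clique_binomial_sq_geq v_gt0) (clique_binomial_sq_leq v_gt0).
- by rewrite bin_gt0; lia.
- have eZ : v ^ k.-1 * v ^ k.-1 = v ^ (k - 2) * (v ^ (k - 2) * (v * v)).
    by rewrite -expn_split -!expnD; congr (v ^ _); lia.
  by rewrite -eZ; apply: leq_mul; apply: bin_leq_exp.
Qed.

Lemma sens_clique_sq_lower :
  exists A N, forall v, N <= v -> v ^ k <= A * (sens_clique v * sens_clique v).
Proof.
eexists; exists ((2 * (4 * k + 1)) ^ (2 * k.-1)) => v le_Nv.
have v_gt0 : 0 < v by apply: leq_trans _ le_Nv; rewrite expn_gt0 muln_gt0 addn1.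
have half := clique_size_half le_Nv; have m_gt := clique_size_gt v_gt0.
have le_cs : 'C(clique_size k v, k.-1) * (v - clique_size k v) <= sens_clique v.
  have := @sens_clique_prop_ge v k k.-1 (clique_size k v).
  by rewrite (_ : k - k.-1 = 1) ?bin1; [apply; lia | lia].
by rewrite expn_split; apply: sens_sq_geq le_cs half (clique_binomial_sq_geq v_gt0).
Qed.

End CliqueSize.

Lemma INR_expn a n : INR (a ^ n) = (INR a ^ n)%R.
Proof. by elim: n => [|n IH]; rewrite ?expn0 // expnS mult_INR IH. Qed.

Lemma INR_leq a b : a <= b -> (INR a <= INR b)%R.
Proof. by move/leP; apply: le_INR. Qed.

Lemma pow_le_reg (x y : R) n : (0 <= y)%R -> 0 < n -> (x ^ n <= y ^ n)%R -> (x <= y)%R.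
Proof.
move=> y_ge0; case: n => // n _ le_pow; apply: Rnot_lt_le => lt_yx.
have : (y ^ n <= x ^ n)%R by apply: pow_incr; lra.
have : (0 < x ^ n)%R by apply: pow_lt; lra.
rewrite /= in le_pow; nra.
Qed.

Lemma Rpower_half (v k : nat) : 0 < v ->
  Rpower (INR v) (INR k / 2) = sqrt (INR (v ^ k)).
Proof.
move=> v_gt0; have v_pos : (0 < INR v)%R by apply: lt_0_INR; apply/ltP.
by rewrite /Rdiv -Rpower_mult Rpower_pow // Rpower_sqrt ?INR_expn //; apply: pow_lt.
Qed.

Lemma bigTheta_eq (g h h' : nat -> R) (N : nat) :
  (forall v, N <= v -> h v = h' v) -> bigTheta g h -> bigTheta g h'.
Proof.
move=> eq_h [c1 [c2 [M [c1_gt0 [c2_gt0 bnd]]]]].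
exists c1, c2, (maxn N M); do 2 split=> //.
by move=> v; rewrite geq_max => /andP[leN leM]; rewrite -eq_h //; apply: bnd.
Qed.

Lemma bigTheta_sqrt (g h : nat -> nat) (A B N : nat) :
  (forall v, N <= v -> h v <= A * (g v * g v)) ->
  (forall v, N <= v -> g v * g v <= B * h v) ->
  bigTheta (fun v => INR (g v)) (fun v => sqrt (INR (h v))).
Proof.
move=> lower upper.
have sqrt_pos n : (0 < sqrt (INR n.+1))%R by apply/sqrt_lt_R0/lt_0_INR/ltP.
exists (/ sqrt (INR A.+1))%R, (sqrt (INR B.+1)), N.
split; first exact/Rinv_0_lt_compat/sqrt_pos.
split=> [|v leNv]; first exact: sqrt_pos.
have sqrt_g : sqrt (INR (g v * g v)) = INR (g v).
  by rewrite mult_INR sqrt_square //; apply: pos_INR.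
split.
- have : (sqrt (INR (h v)) <= sqrt (INR A.+1) * INR (g v))%R.
    rewrite -sqrt_g -(sqrt_mult_alt _ _ (pos_INR _)) -mult_INR multE.
    by apply/sqrt_le_1_alt/INR_leq/(leq_trans (lower v leNv)); rewrite leq_mul2r leqnSn orbT.
  have := sqrt_pos A; move: (sqrt (INR A.+1)) => a a_pos le_ha.
  apply: (Rmult_le_reg_l a) => //; rewrite -Rmult_assoc Rinv_r ?Rmult_1_l; lra.
- rewrite -sqrt_g -(sqrt_mult_alt _ _ (pos_INR _)) -mult_INR multE.
  by apply/sqrt_le_1_alt/INR_leq/(leq_trans (upper v leNv)); rewrite leq_mul2r leqnSn orbT.
Qed.

Section CliqueAsymptotics.
Variable k : nat.
Hypothesis lt1k : 1 < k.

Lemma clique_exponentP :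
  let t := (INR (k - 2) / INR (2 * k.-1))%R in
  [/\ (0 <= t <= 1)%R, (INR k.-1 * (1 - t) = INR k / 2)%R
    & (t * INR (2 * k.-1) = INR (k - 2))%R].
Proof.
move=> t; have K2 : (2 <= INR k)%R by apply: (INR_leq lt1k).
have INR_pred : INR k.-1 = (INR k - 1)%R.
  by rewrite -[RHS]/(INR k - INR 1)%R -minus_INR; [congr INR; lia | apply/leP; lia].
have INR_sub2 : INR (k - 2) = (INR k - 2)%R.
  by rewrite -[RHS]/(INR k - INR 2)%R -minus_INR; [congr INR; lia | apply/leP; lia].
have INR2 : INR 2 = 2%R by rewrite /=; lra.
have ht : (t * INR (2 * k.-1) = INR (k - 2))%R.
  by rewrite /t mult_INR INR_pred INR2; field; lra.
split=> //; rewrite mult_INR INR_pred INR_sub2 INR2 in ht *; [split|]; nra.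
Qed.

Lemma bigTheta_clique_size (t : R) : (t * INR (2 * k.-1) = INR (k - 2))%R ->
  bigTheta (fun v => INR (clique_size k v)) (fun v => Rpower (INR v) t).
Proof.
move=> ht; have n_gt0 : 0 < 2 * k.-1 by lia.
have K1 : (1 <= INR (4 * k + 1))%R by apply: (INR_leq (_ : 1 <= 4 * k + 1)); lia.
exists (/2)%R, (INR (4 * k + 1)), 1; split; first lra.
split=> [|v v_gt0]; first lra.
have [r_gt0 le_rv le_vr] := clique_root_bounds lt1k v_gt0.
set r := clique_root k v in r_gt0 le_rv le_vr *; set y := Rpower (INR v) t.
have y_gt0 : (0 < y)%R by apply: exp_pos.
have yn : (y ^ (2 * k.-1) = INR (v ^ (k - 2)))%R.
  rewrite -Rpower_pow // /y Rpower_mult ht Rpower_pow ?INR_expn //.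
  by apply: lt_0_INR; apply/ltP.
have le_ry : (INR r <= y)%R.
  by apply: (pow_le_reg (n := 2 * k.-1)); [lra | | rewrite yn -INR_expn; apply: INR_leq].
have le_yr : (y <= 2 * INR r)%R.
  apply: (pow_le_reg (n := 2 * k.-1)); [have := pos_INR r; lra | exact: n_gt0 |].
  by rewrite yn -[2%R]/(INR 2) -mult_INR -INR_expn; apply: INR_leq; rewrite multE expnMn.
rewrite /clique_size mult_INR -/r; have := pos_INR r; split; nra.
Qed.

Lemma bigTheta_sens_clique :
  bigTheta (fun v => INR (sens (@clique_prop v k k.-1 (clique_size k v))))
           (fun v => Rpower (INR v) (INR k / 2)).
Proof.
have [B upper] := sens_clique_sq_upper lt1k.
have [A [N lower]] := sens_clique_sq_lower lt1k.
apply: (@bigTheta_eq _ (fun v => sqrt (INR (v ^ k))) _ 1) => [v v_gt0|].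
  by rewrite Rpower_half.
apply: (@bigTheta_sqrt _ _ A B (maxn N 1)) => v; rewrite geq_max => /andP[leNv v_gt0].
- exact: lower.
- exact: upper.
Qed.

Lemma bigTheta_sens_clique_binomial :
  bigTheta (fun v => INR (sens (@clique_prop v k k.-1 (clique_size k v))))
           (fun v => sqrt (INR 'C(v, k))).
Proof.
have [B upper] := sens_clique_sq_upper lt1k.
have [A [N lower]] := sens_clique_sq_lower lt1k.
apply: (@bigTheta_sqrt _ _ A (B * (2 ^ k * k`!)) (maxn N (2 * k))) => v;
  rewrite geq_max => /andP[leNv le2kv].
- exact: leq_trans (bin_leq_exp v k) (lower v leNv).
- apply: leq_trans (upper v _) _; first lia.
  by rewrite -mulnA leq_mul2l exp_leq_bin ?orbT.
Qed.

End CliqueAsymptotics.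

Theorem proposition3p5 :
  (forall k : nat, (3 <= k)%nat ->
     exists (i : nat) (t : R) (m : nat -> nat),
       (1 <= i)%nat /\ (i < k)%nat /\ (0 <= t <= 1)%R /\
       (INR i * (1 - t) = INR k / 2)%R /\
       bigTheta (fun v => INR (m v)) (fun v => Rpower (INR v) t) /\
       bigTheta (fun v => INR (sens (@clique_prop v k i (m v))))
                (fun v => Rpower (INR v) (INR k / 2)))
  /\
  (forall k : nat, (2 <= k)%nat ->
     exists f : forall v : nat, hgraph v k -> bool,
       (forall v : nat, is_hproperty (f v)) /\
       bigTheta (fun v => INR (sens (f v))) (fun v => Rpower (INR v) (INR k / 2)) /\
       bigTheta (fun v => INR (sens (f v))) (fun v => sqrt (INR 'C(v, k)))).
Proof.
split=> k le_k.
- have lt1k : 1 < k by lia.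
  have [t_range t_half t_exp] := clique_exponentP lt1k.
  exists k.-1, (INR (k - 2) / INR (2 * k.-1))%R, (clique_size k).
  do 2 (split; first lia); do 2 (split; first by []).
  split; [exact: bigTheta_clique_size | exact: bigTheta_sens_clique].
- exists (fun v => @clique_prop v k k.-1 (clique_size k v)); split.
    by move=> v; apply: clique_prop_hproperty.
  by split; [exact: bigTheta_sens_clique | exact: bigTheta_sens_clique_binomial].
Qed.
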